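(* Let $X$ be a pointed set and $k\ge 1$. Then the diagram $$\mathrm{ab}\circ H_k=\pi_k\circ\mu\colon F[X]\to \bar{\mathbb Z}[X^{\wedge k}]$$ commutes, where $H_k\colon F[X]\to F[X^{\wedge k}]$ is the combinatorial James–Hopf map, $\mu\colon F[X]\to\mathbb Z\langle\langle X\rangle\rangle$ is the Magnus embedding, $\pi_k$ is the projection of a formal power series onto its homogeneous component of degree $k$, and $\mathrm{ab}\colon F[X^{\wedge k}]\to\bar{\mathbb Z}[X^{\wedge k}]$ is abelianization.
   Context: For a pointed set $X$ with basepoint $*$, $F[X]$ is the free group on $X$ modulo the relation $*=1$ (the reduced free group; for pointed simplicial sets it is applied degreewise, Milnor's construction). $X^{\wedge k}$ is the $k$-fold smash product; its non-basepoint elements are $x_1\wedge\dots\wedge x_k$ with all $x_i\neq *$. $\bar{\mathbb Z}[Y]=\mathbb Z[Y]/\mathbb Z[*]$ is the free abelian group on $Y\setminus\{*\}$. $\mathbb Z\langle\langle X\rangle\rangle$ is the ring of formal power series in the non-commuting variables $X\setminus\{*\}$, and its degree-$k$ homogeneous component is identified with $\bar{\mathbb Z}[X^{\wedge k}]\cong\bar{\mathbb Z}[X]^{\otimes k}$ via $x_1\wedge\dots\wedge x_k\leftrightarrow x_1\cdots x_k$. The Magnus embedding is the homomorphism $\mu$ with $\mu(x)=1+x$ for $x\in X\setminus\{*\}$. Combinatorial James–Hopf map: for a reduced word $w=x_1^{\varepsilon_1}\cdots x_n^{\varepsilon_n}\in F[X]$ ($x_i\in X$, $\varepsilon_i=\pm1$),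 $$H_k(w)=\prod_{(i_1,\dots,i_k)}(x_{i_1}\wedge\dots\wedge x_{i_k})^{\varepsilon_{i_1}\cdots\varepsilon_{i_k}}\in F[X^{\wedge k}],$$ the product taken over all sequences $1\le i_1,\dots,i_k\le n$ with $i_j\le i_{j+1}-\frac{\varepsilon_{i_{j+1}}+1}{2}$ for all $j$ (i.e. $i_j<i_{j+1}$ if $\varepsilon_{i_{j+1}}=1$, and $i_j\le i_{j+1}$ if $\varepsilon_{i_{j+1}}=-1$), with factors arranged in right lexicographic order: $(i_1,\dots,i_k)$ precedes $(j_1,\dots,j_k)$ iff at the largest position $m$ where they differ, $i_m<j_m$. On positive words this restricts to the classical combinatorial James–Hopf map $x_1\cdots x_n\mapsto\prod_{i_1<\dots<i_k}x_{i_1}\wedge\dots\wedge x_{i_k}$ on the James construction. For simplicial sets $H_k$ is defined degreewise. *)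

From HB Require Import structures.
From mathcomp Require Import all_boot all_order all_algebra.
Set Implicit Arguments. Unset Strict Implicit. Unset Printing Implicit Defensive.
Import Order.TTheory GRing.Theory Num.Theory.
Local Open Scope ring_scope.

Section JamesHopf.
Variables (X : eqType) (pt : X).

(* A letter x^eps of F[X]: (x, true) = x^{+1}, (x, false) = x^{-1}. *)
Definition letter := (X * bool)%type.

(* Reduced words representing elements of F[X] (reduced free group:
   no basepoint letters, no cancelling adjacent pairs). *)
Definition reduced_word (w : seq letter) : bool :=
  all (fun l => l.1 != pt) w &&
  [forall i : 'I_(size w).-1,
     ~~ (((nth (pt, true) w i).1 == (nth (pt, true) w i.+1).1) &&
         ((nth (pt, true) w i).2 == ~~ (nth (pt, true) w i.+1).2))].

(* All index sequences (i_1,...,i_k) in {0,...,n-1}^k, listed in right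
   lexicographic order (last coordinate is the most significant). *)
Fixpoint idx_tuples (n k : nat) : seq (seq nat) :=
  match k with
  | 0 => [:: [::]]
  | k'.+1 => flatten [seq [seq rcons t i | t <- idx_tuples n k'] | i <- iota 0 n]
  end.

Definition admissible (w : seq letter) (t : seq nat) : bool :=
  [forall j : 'I_(size t).-1,
     let a := nth 0%N t j in let b := nth 0%N t j.+1 in
     if (nth (pt, true) w b).2 then (a < b)%N else (a <= b)%N].

(* Combinatorial James-Hopf map H_k(w), as a word in F[X^{/\k}]: a list of
   letters (x_{i_1} /\ ... /\ x_{i_k})^{eps_{i_1}...eps_{i_k}}, the smash
   element being represented by the k-tuple (seq) of its components. *)
Definition james_hopf (k : nat) (w : seq letter) : seq (seq X * bool) :=
  [seq ([seq (nth (pt, true) w i).1 | i <- t],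
        ~~ odd (count (fun i => ~~ (nth (pt, true) w i).2) t))
  | t <- idx_tuples (size w) k & admissible w t].

(* Zbar[Y]-valued abelianization of a word in F[Y]: coefficient of the basis
   element y in ab(word). Elements of Zbar[Y] are represented by their
   coefficient functions. *)
Definition ab (Y : eqType) (u : seq (Y * bool)) (y : Y) : int :=
  \sum_(l <- u) (if l.1 == y then (if l.2 then 1 else -1) else 0).

(* Formal power series in non-commuting variables X: coefficient functions
   on monomials (words in X). *)
Definition pseries := seq X -> int.

Definition ps_one : pseries := fun m => if m is [::] then 1 else 0.

Definition ps_mul (f g : pseries) : pseries :=
  fun m => \sum_(i < (size m).+1) f (take i m) * g (drop i m).

(* Magnus image of a letter: 1 + x, or (1 + x)^{-1} = sum_n (-x)^n. *)
Definition magnus_letter (l : letter) : pseries :=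
  fun m =>
    if l.2 then (if m is [::] then 1 else if m == [:: l.1] then 1 else 0)
    else (if all (eq_op^~ l.1) m then (-1) ^+ size m else 0).

Definition magnus (w : seq letter) : pseries :=
  foldr (fun l acc => ps_mul (magnus_letter l) acc) ps_one w.

Definition pi_k (k : nat) (f : pseries) : pseries :=
  fun m => if size m == k then f m else 0.

End JamesHopf.

(* Both sides are signed counts of the admissible index tuples (i_1,...,i_k)
   whose letters spell the monomial m.  For H_k this is the definition.  For
   mu, expanding the product of the factors mu(x^eps) letter by letter, a
   monomial m arises by letting the first letter contribute a block
   (x_1)^i of m, which is allowed for any i if eps = -1 (with sign (-1)^i)
   and only for i <= 1 if eps = +1; such choices are exactly the admissible
   tuples, whose first i coordinates are then 0. *)

From HB Require Import structures.
From mathcomp Require Import all_boot all_algebra.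
Import GRing.Theory.

Lemma mem_idx_tuples n k t :
  (t \in idx_tuples n k) = (size t == k) && all (fun i => i < n) t.
Proof.
elim: k t => [|k IHk] t /=; first by case: t.
apply/allpairsPdep/idP => [[i [s [ilt sin ->]]]|].
  move: sin ilt; rewrite IHk mem_iota size_rcons all_rcons eqSS.
  by case/andP=> -> -> /andP[_ ->].
case/lastP: t => [//|s i]; rewrite size_rcons all_rcons eqSS => /and3P[sz ilt alls].
by exists i, s; rewrite mem_iota IHk sz alls ilt.
Qed.

Lemma uniq_idx_tuples n k : uniq (idx_tuples n k).
Proof.
elim: k => //= k IHk; apply: allpairs_uniq_dep => //; first exact: iota_uniq.
by move=> [i s] [j r] _ _ /= /rcons_inj [-> ->].
Qed.

Definition lift_idx (i : nat) (t : seq nat) : seq nat := nseq i 0 ++ map succn t.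

Lemma lift_idx_inj i j s t : lift_idx i s = lift_idx j t -> i = j /\ s = t.
Proof.
have find_lift r u : find (fun a => a != 0) (lift_idx r u) = r.
  by rewrite find_cat has_nseq andbF size_nseq; case: u => [|? ?]; rewrite /= addn0.
move=> eq_st; have eq_ij : i = j by rewrite -(find_lift i s) -(find_lift j t) eq_st.
split=> //; move: eq_st; rewrite /lift_idx eq_ij => /(congr1 (drop j)).
by rewrite !drop_size_cat ?size_nseq //; apply: inj_map => a b [].
Qed.

Lemma lift_idx_of_sorted t : sorted leq t -> exists i t', t = lift_idx i t'.
Proof.
elim: t => [|a t IHt] /=; first by exists 0, [::].
move=> sorted_at; have [i [t' def_t]] := IHt (path_sorted sorted_at).
move: sorted_at; rewrite {}def_t /lift_idx.
case: a => [|a] sorted_at; first by exists i.+1, t'.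
by exists 0, (a :: t'); case: i sorted_at => [//|i] /andP[].
Qed.

Section Spellings.
Variables (X : eqType) (pt : X).
Local Notation x0 := (pt, true).
Implicit Types (l : X * bool) (w : seq (X * bool)) (m : seq X) (t : seq nat).

Definition adm_rel w : rel nat :=
  fun a b => if (nth x0 w b).2 then a < b else a <= b.

Lemma admissible_sorted w t : admissible pt w t = sorted (adm_rel w) t.
Proof.
apply/forallP/(sortedP 0) => [adm_t i lt_i|adm_t [i lt_i]].
  have lt_i' : i < (size t).-1 by move: lt_i; case: (size t).
  exact: (adm_t (Ordinal lt_i')).
by apply: adm_t; move: lt_i; case: (size t).
Qed.

Lemma adm_rel_leq w : subrel (adm_rel w) leq.
Proof. by move=> a b; rewrite /adm_rel; case: ifP => // _ /ltnW. Qed.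

Lemma sorted_lift_idx l w i t :
  sorted (adm_rel (l :: w)) (lift_idx i t) = (l.2 ==> (i <= 1)) && sorted (adm_rel w) t.
Proof.
have shift b u : path (adm_rel (l :: w)) b.+1 (map succn u) = path (adm_rel w) b u.
  by rewrite path_map; apply: eq_path.
have path0_shift : path (adm_rel (l :: w)) 0 (map succn t) = sorted (adm_rel w) t.
  by case: t => //= b u; rewrite shift /adm_rel; case: ifP.
have path0_nseq n : path (adm_rel (l :: w)) 0 (nseq n 0) = (n == 0) || ~~ l.2.
  by elim: n => //= n ->; rewrite /adm_rel /=; case: (l.2); case: n.
case: i => [|i]; first by rewrite implybT; case: t {path0_shift} => //= b u; rewrite shift.
have last_nseq0 : last 0 (nseq i 0) = 0 by elim: i.
rewrite /lift_idx /= cat_path path0_nseq last_nseq0 path0_shift.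
by case: (l.2); case: (i).
Qed.

Definition spell w t : seq X := [seq (nth x0 w i).1 | i <- t].

Lemma spell_lift_idx l w i t : spell (l :: w) (lift_idx i t) = nseq i l.1 ++ spell w t.
Proof. by rewrite /spell map_cat map_nseq -map_comp. Qed.

Definition letter_supp l m : bool := (l.2 ==> (size m <= 1)) && all (pred1 l.1) m.

Lemma magnus_letterE l m :
  magnus_letter l m = if letter_supp l m then (if l.2 then 1 else (-1) ^+ size m)%R else 0%R.
Proof.
rewrite /magnus_letter /letter_supp; case: l => x [] //=.
by case: m => [|a [|b m]] //=; rewrite ?andbT ?eqseq_cons ?andbT //; case: (a == x).
Qed.

Lemma letter_supp_take l m i : i <= size m ->
  letter_supp l (take i m) = (l.2 ==> (i <= 1)) && (take i m == nseq i l.1).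
Proof.
move=> le_im; rewrite /letter_supp size_takel //; congr andb.
by apply/all_pred1P/eqP; rewrite size_takel.
Qed.

Fixpoint spellings w m : seq (seq nat) :=
  if w is l :: w' then
    [seq lift_idx i t | i <- iota 0 (size m).+1,
       t <- if letter_supp l (take i m) then spellings w' (drop i m) else [::]]
  else if m is [::] then [:: [::]] else [::].

Lemma spellings_cons l w m : spellings (l :: w) m =
  [seq lift_idx i t | i <- iota 0 (size m).+1,
     t <- if letter_supp l (take i m) then spellings w (drop i m) else [::]].
Proof. by []. Qed.

Lemma mem_spellings w m t : (t \in spellings w m) =
  [&& all (fun i => i < size w) t, sorted (adm_rel w) t & spell w t == m].
Proof.
elim: w m t => [|l w IHw] m t; first by case: m => [|? ?]; case: t.
apply/allpairsPdep/and3P => [[i [t' [i_in t'_in ->]]]|[lt_t sorted_t /eqP spell_t]].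
  rewrite mem_iota ltnS /= in i_in; move: t'_in; case: ifP => // supp_i.
  rewrite letter_supp_take // in supp_i; case/andP: supp_i => supp_i /eqP take_i.
  rewrite IHw => /and3P[lt_t' sorted_t' /eqP spell_t'].
  split; first by rewrite all_cat all_nseq orbT /= all_map.
    by rewrite sorted_lift_idx supp_i.
  by rewrite spell_lift_idx -take_i spell_t' cat_take_drop.
have /lift_idx_of_sorted[i [t' def_t]] := sub_sorted (@adm_rel_leq _) sorted_t.
move: lt_t sorted_t spell_t; rewrite {}def_t sorted_lift_idx spell_lift_idx.
rewrite all_cat all_map => /andP[_ lt_t'] /andP[supp_i sorted_t'] def_m.
have le_im : i <= size m by rewrite -def_m size_cat size_nseq leq_addr.
exists i, t'; split=> //; first by rewrite mem_iota ltnS le_im.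
rewrite letter_supp_take // supp_i -def_m take_size_cat ?size_nseq //= eqxx.
by rewrite IHw drop_size_cat ?size_nseq // lt_t' sorted_t' eqxx.
Qed.

Lemma uniq_spellings w m : uniq (spellings w m).
Proof.
elim: w m => [|l w IHw] m; first by case: m.
apply: allpairs_uniq_dep; first exact: iota_uniq.
  by move=> i _; case: ifP.
by move=> [i s] [j t] _ _ /= /lift_idx_inj [-> ->].
Qed.

Lemma perm_spellings w m : perm_eq (spellings w m)
  [seq t <- idx_tuples (size w) (size m) | admissible pt w t && (spell w t == m)].
Proof.
apply: uniq_perm; rewrite ?filter_uniq ?uniq_spellings ?uniq_idx_tuples // => t.
rewrite mem_filter mem_spellings mem_idx_tuples admissible_sorted.
case: eqP => [<-|]; last by rewrite !andbF.
by rewrite size_map eqxx /= andbC andbT.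
Qed.

Definition idx_sign w t : int := (-1) ^+ count (fun i => ~~ (nth x0 w i).2) t.

Lemma idx_sign_lift l w i t :
  idx_sign (l :: w) (lift_idx i t) = ((if l.2 then 1 else (-1) ^+ i) * idx_sign w t)%R.
Proof.
rewrite /idx_sign count_cat count_nseq count_map exprD.
by case: (l.2); rewrite /= ?mul0n ?expr0 ?mul1n.
Qed.

Lemma magnus_cons l w : magnus (l :: w) = ps_mul (magnus_letter l) (magnus w).
Proof. by []. Qed.

Lemma magnus_spellings w m : magnus w m = (\sum_(t <- spellings w m) idx_sign w t)%R.
Proof.
elim: w m => [|l w IHw] m; first by case: m => [|? ?]; rewrite ?big_seq1 ?big_nil.
rewrite magnus_cons /ps_mul spellings_cons big_allpairs_dep.
rewrite -(big_mkord xpredT (fun i => magnus_letter l (take i m) * magnus w (drop i m)))%R.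
rewrite /index_iota subn0.
apply: eq_big_seq => i; rewrite mem_iota ltnS => /andP[_ le_im].
rewrite IHw big_distrr magnus_letterE.
case: ifP => _; last by rewrite big_nil big1 // => t _; exact: mul0r.
by apply: eq_bigr => t _; rewrite idx_sign_lift size_takel.
Qed.

Lemma ab_james_hopf k w m : ab (james_hopf pt k w) m =
  (\sum_(t <- idx_tuples (size w) k | admissible pt w t && (spell w t == m)) idx_sign w t)%R.
Proof.
rewrite /ab /james_hopf big_map big_filter big_mkcondr; apply: eq_bigr => t _ /=.
by case: (_ == m) => //; rewrite /idx_sign -signr_odd; case: odd.
Qed.

End Spellings.

Theorem theorem2p2 (X : eqType) (pt : X) (k : nat) (w : seq (X * bool)) :
  (1 <= k)%N -> reduced_word pt w ->
  forall m : seq X, size m = k -> all (fun x => x != pt) m ->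
  ab (james_hopf pt k w) m = pi_k k (magnus w) m.
Proof.
move=> _ _ m size_m _.
rewrite /pi_k size_m eqxx (magnus_spellings _ pt) ab_james_hopf -big_filter -size_m.
by apply: perm_big; rewrite perm_sym perm_spellings.
Qed.
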